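(* Let $q>4$ and let $\mathcal{C}\le\mathbb{F}_q^{2n}$ be a formally self-dual divisible linear code of length $2n$. Then $\mathcal{C}$ is monomially equivalent to the direct sum of $n$ copies of $\langle(1,1)\rangle_{\mathbb{F}_q}$.
   Context: For a linear code $\mathcal{C}\le\mathbb{F}_q^N$, $W_\mathcal{C}(x,y)=\sum_{c\in\mathcal{C}}x^{N-\mathrm{wt}(c)}y^{\mathrm{wt}(c)}$, where $\mathrm{wt}(c)$ is the number of nonzero coordinates. $\mathcal{C}$ is formally self-dual if $W_\mathcal{C}(x,y)=W_\mathcal{C}\big(\tfrac{x+(q-1)y}{\sqrt q},\tfrac{x-y}{\sqrt q}\big)$. $\mathcal{C}$ is divisible if there is an integer $\Delta>1$ dividing the weight of every codeword. Two codes are monomially equivalent if one is the image of the other under $v\mapsto DPv$ with $D$ invertible diagonal and $P$ a permutation matrix; the direct sum of $n$ copies of $\langle(1,1)\rangle_{\mathbb{F}_q}$ is the code in $\mathbb{F}_q^{2n}$ with block-diagonal generator matrix of $n$ blocks $(1\ 1)$. *)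

From HB Require Import structures.
From mathcomp Require Import all_boot all_order all_algebra all_fingroup all_field.
Set Implicit Arguments. Unset Strict Implicit. Unset Printing Implicit Defensive.
Import Order.TTheory GRing.Theory Num.Theory.
Local Open Scope ring_scope.

Notation code F N := {vspace 'rV[F]_N}.

Definition wt (F : finFieldType) (N : nat) (c : 'rV[F]_N) : nat :=
  #|[set i : 'I_N | c 0 i != 0]|.

Definition weight_enum (F : finFieldType) (N : nat) (C : code F N) (x y : algC) : algC :=
  \sum_(c : 'rV[F]_N | c \in C) x ^+ (N - wt c) * y ^+ (wt c).

(* Formally self-dual: W_C(x,y) = W_C((x+(q-1)y)/sqrt q, (x-y)/sqrt q),
   as an identity of polynomials (equivalently of functions on algC, an infinite field). *)
Definition formally_self_dual (F : finFieldType) (N : nat) (C : code F N) : Prop :=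
  let q := #|F| in
  forall x y : algC,
    weight_enum C x y =
    weight_enum C ((x + (q - 1)%N%:R * y) / sqrtC q%:R) ((x - y) / sqrtC q%:R).

Definition divisible (F : finFieldType) (N : nat) (C : code F N) : Prop :=
  exists Delta : nat, (1 < Delta)%N /\ forall c, c \in C -> (Delta %| wt c)%N.

Definition monomially_equivalent (F : finFieldType) (N : nat) (C C' : code F N) : Prop :=
  exists (D : 'M[F]_N) (s : 'S_N),
    is_diag_mx D /\ D \in unitmx /\
    forall v : 'rV[F]_N,
      v \in C' <-> exists2 c, c \in C & v = (D *m perm_mx s *m c^T)^T.

(* Block-diagonal generator matrix with n blocks (1 1). *)
Definition rep_gen (F : finFieldType) (n : nat) : 'M[F]_(n, 2 * n) :=
  \matrix_(i < n, j < 2 * n) (if (j %/ 2)%N == i then 1 else 0).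

Definition rep_sum (F : finFieldType) (n : nat) : code F (2 * n) :=
  <<[seq row i (rep_gen F n) | i <- enum 'I_n]>>%VS.

From HB Require Import structures.
From mathcomp Require Import all_boot all_order all_algebra all_fingroup all_field.
From mathcomp Require Import ring zify.
From Stdlib Require Import Classical.
Set Implicit Arguments. Unset Strict Implicit. Unset Printing Implicit Defensive.
Import Order.TTheory GRing.Theory Num.Theory.
Local Open Scope ring_scope.

(* Write W for the weight enumerator of C and q = |F|. If Delta divides every
   weight, W(x, z y) = W(x, y) for each Delta-th root of unity z, so W is
   invariant under the MacWilliams transform composed with y |-> z y. This
   linear map has eigenforms x + alpha y and x + beta y whose eigenvalue ratio
   rho satisfies rho + rho^-1 + 2 = (1 - z)(1 - z^-1)/q. If rho is not a root of
   unity, W is forced to be (x + alpha y)^a (x + beta y)^(N - a); otherwise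
   (1 - z)(1 - z^-1)/q is an algebraic integer.
   For Delta >= 3 and N > 0 the product form would have codewords of weight 1
   or 2, so all the algebraic-integer alternatives hold, and their product over
   z <> 1 is the rational Delta^2 / q^(Delta - 1), which lies in (0, 1).
   For Delta = 2, z = -1 gives 4/q, not an algebraic integer when q > 4, so
   W(1, t) = (1 + (q - 1) t^2)^n: C has dimension n and n(q - 1) words of
   weight 2. Their supports are n pairwise disjoint pairs (two overlapping ones
   would combine into a word of weight 3), which partition the coordinates;
   normalising one weight-2 word per pair gives the monomial map. *)

Lemma poly_eq0_horner (R : numDomainType) (p : {poly R}) :
  (forall x, p.[x] = 0) -> p = 0.
Proof.
move=> p_root; apply/eqP; apply: contraT => p_neq0.
pose s := [seq (i%:R : R) | i <- iota 0 (size p)].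
have s_roots : all (root p) s by apply/allP => x _; rewrite /root p_root.
have s_uniq : uniq s by rewrite map_inj_uniq ?iota_uniq //; apply: mulrIn; rewrite oner_eq0.
by have := max_poly_roots p_neq0 s_roots s_uniq; rewrite size_map size_iota ltnn.
Qed.

Lemma dilation_invariant_monomial (R : numDomainType) (P : {poly R}) (c r : R) :
  (forall k, (0 < k)%N -> r ^+ k != 1) -> (forall z, P.[z] = c * P.[r * z]) ->
  P = lead_coef P *: 'X^((size P).-1).
Proof.
move=> r_nroot P_dil.
have coefP i : P`_i = c * r ^+ i * P`_i.
  pose Q := c *: \poly_(j < size P) (r ^+ j * P`_j).
  have PQ : P = Q.
    apply/eqP; rewrite -subr_eq0; apply/eqP/poly_eq0_horner => z.
    rewrite hornerD hornerN hornerZ horner_poly P_dil horner_coef !mulr_sumr.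
    apply/eqP; rewrite subr_eq0; apply/eqP/eq_bigr => j _.
    by rewrite exprMn [P`_j * _]mulrCA mulrA.
  rewrite {1}PQ coefZ coef_poly; case: ltnP => [_|le_Pi]; first by rewrite mulrA.
  by rewrite nth_default // !mulr0.
apply/polyP => i; rewrite coefZ coefXn lead_coefE.
have [P0|P_neq0] := eqVneq P 0; first by rewrite P0 !coef0 mul0r.
set a := (size P).-1.
have Pa_neq0 : P`_a != 0 by rewrite -lead_coefE lead_coef_eq0.
have [->|ne_ia] := eqVneq i a; first by rewrite mulr1.
rewrite mulr0; apply/eqP; apply: contraT => Pi_neq0.
have [lt_ai|le_ia] := ltnP a i.
  have le_Pi : (size P <= i)%N := leq_trans (leqSpred _) lt_ai.
  by move: Pi_neq0; rewrite nth_default ?eqxx.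
have unit_at j : P`_j != 0 -> c * r ^+ j = 1.
  by move=> Pj; apply: (mulIf Pj); rewrite mul1r -coefP.
have := r_nroot (a - i)%N; rewrite subn_gt0 ltn_neqAle ne_ia le_ia => /(_ isT).
apply: contraNT => _.
rewrite -[_ ^+ _]mul1r -(unit_at i Pi_neq0) -mulrA -exprD subnKC //.
by rewrite !unit_at.
Qed.

Section EigenForms.
Variables (W : algC -> algC -> algC) (N : nat).
Hypothesis W_homog : forall a x y, W (a * x) (a * y) = a ^+ N * W x y.
Hypothesis W_line_poly : forall x0 x1 y0 y1, exists2 P : {poly algC},
  (size P <= N.+1)%N & forall z, P.[z] = W (x0 + x1 * z) (y0 + y1 * z).
Variables (gx gy : algC -> algC -> algC) (al be l1 l2 : algC).
Hypothesis W_inv : forall x y, W (gx x y) (gy x y) = W x y.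
Hypotheses (al_neq_be : al != be) (l2_neq0 : l2 != 0).
Hypothesis eig_al : forall x y, gx x y + al * gy x y = l1 * (x + al * y).
Hypothesis eig_be : forall x y, gx x y + be * gy x y = l2 * (x + be * y).
Hypothesis eig_ratio_nroot : forall k, (0 < k)%N -> (l1 / l2) ^+ k != 1.

Lemma eigen_coords_inj x y x' y' :
  x + al * y = x' + al * y' -> x + be * y = x' + be * y' -> x = x' /\ y = y'.
Proof.
move=> e_al e_be.
have : (al - be) * (y - y') = 0.
  transitivity (x + al * y - (x' + al * y') - (x + be * y - (x' + be * y'))).
    by ring.
  by rewrite e_al e_be !subrr.
move/eqP; rewrite mulf_eq0 subr_eq0 (negPf al_neq_be) /= subr_eq0 => /eqP yy'.
by move: e_al; rewrite yy' => /addIr.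
Qed.

Lemma eigenform_factor : exists K, exists2 a, (a <= N)%N & forall x y,
  x + be * y != 0 -> W x y = K * (x + al * y) ^+ a * (x + be * y) ^+ (N - a).
Proof.
have d_neq0 : al - be != 0 by rewrite subr_eq0.
(* The line on which the eigencoordinates are (z, 1). *)
pose px z := al / (al - be) + (- be / (al - be)) * z.
pose py z := -1 / (al - be) + (1 / (al - be)) * z.
have pu z : px z + al * py z = z by rewrite /px /py; field.
have pv z : px z + be * py z = 1 by rewrite /px /py; field.
have [P szP HP] :=
  W_line_poly (al / (al - be)) (- be / (al - be)) (-1 / (al - be)) (1 / (al - be)).
have P_dil z : P.[z] = l2 ^+ N * P.[l1 / l2 * z].
  rewrite !HP -/(px z) -/(py z) -/(px _) -/(py _) -W_homog -[LHS]W_inv.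
  have [-> ->] : gx (px z) (py z) = l2 * px (l1 / l2 * z) /\
                 gy (px z) (py z) = l2 * py (l1 / l2 * z).
    apply: eigen_coords_inj.
      by rewrite eig_al pu [al * (l2 * _)]mulrCA -mulrDr pu; field.
    by rewrite eig_be pv [be * (l2 * _)]mulrCA -mulrDr pv.
  by [].
have W_on_P x y : x + be * y != 0 ->
    W x y = (x + be * y) ^+ N * P.[(x + al * y) / (x + be * y)].
  move=> v_neq0; set u := x + al * y; set v := x + be * y.
  have [-> ->] : x = v * px (u / v) /\ y = v * py (u / v).
    apply: eigen_coords_inj.
      by rewrite [al * (v * _)]mulrCA -mulrDr pu [v * (u / v)]mulrC divfK.
    by rewrite [be * (v * _)]mulrCA -mulrDr pv mulr1.
  by rewrite HP -W_homog.
have aN : ((size P).-1 <= N)%N by case: (size P) szP.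
exists (lead_coef P), (size P).-1 => // x y v_neq0.
rewrite W_on_P // {1}(dilation_invariant_monomial eig_ratio_nroot P_dil).
rewrite hornerZ hornerXn; set u := x + al * y; set v := x + be * y.
rewrite -[in v ^+ N](subnK aN) exprD expr_div_n; field.
by rewrite expf_neq0.
Qed.

End EigenForms.

Lemma size_lin_exp (R : nzRingType) (c0 c1 : R) k :
  (size ((c0%:P + c1 *: 'X) ^+ k)%R <= k.+1)%N.
Proof.
have size_lin : (size (c0%:P + c1 *: 'X)%R <= 2)%N.
  rewrite (leq_trans (size_polyD _ _)) // geq_max (leq_trans (size_polyC_leq1 _)) //.
  by rewrite (leq_trans (size_scale_leq _ _)) // size_polyX.
rewrite (leq_trans (size_poly_exp_leq _ _)) // ltnS -[leqRHS]mul1n leq_mul //.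
by rewrite -subn1 leq_subLR.
Qed.

Section WeightPolynomial.
Variables (F : finFieldType) (N : nat) (C : code F N).

Lemma wt_le (c : 'rV[F]_N) : (wt c <= N)%N.
Proof. by rewrite /wt (leq_trans (max_card _)) // card_ord. Qed.

Lemma wt_eq0 (c : 'rV[F]_N) : (wt c == 0%N) = (c == 0).
Proof.
rewrite /wt cards_eq0; apply/eqP/eqP => [c_supp0|->]; last first.
  by apply/setP => j; rewrite !inE mxE eqxx.
apply/rowP => j; rewrite mxE; apply/eqP; apply: contraT => cj_neq0.
by have := in_set0 j; rewrite -c_supp0 inE cj_neq0.
Qed.

Lemma weight_enum_homog a x y :
  weight_enum C (a * x) (a * y) = a ^+ N * weight_enum C x y.
Proof.
rewrite /weight_enum mulr_sumr; apply: eq_bigr => c _.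
by rewrite !exprMn mulrACA -exprD subnK ?wt_le // mulrA.
Qed.

Lemma weight_enum_line_poly x0 x1 y0 y1 : exists2 P : {poly algC},
  (size P <= N.+1)%N & forall z, P.[z] = weight_enum C (x0 + x1 * z) (y0 + y1 * z).
Proof.
exists (\sum_(c : 'rV[F]_N | c \in C)
   (x0%:P + x1 *: 'X) ^+ (N - wt c) * (y0%:P + y1 *: 'X) ^+ (wt c)).
  rewrite (leq_trans (size_sum _ _ _)) //; apply/bigmax_leqP => c _.
  rewrite (leq_trans (size_polyMleq _ _)) //.
  have := leq_add (size_lin_exp x0 x1 (N - wt c)) (size_lin_exp y0 y1 (wt c)).
  by rewrite addSn addnS subnK ?wt_le // -subn1 leq_subLR.
move=> z; rewrite horner_sum /weight_enum; apply: eq_bigr => c _.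
by rewrite hornerM !horner_exp !hornerD !hornerC !hornerZ hornerX.
Qed.

Lemma weight_enum_rot (D : nat) (z : algC) x y :
  (forall c, c \in C -> (D %| wt c)%N) -> z ^+ D = 1 ->
  weight_enum C x (z * y) = weight_enum C x y.
Proof.
move=> D_wt zD; rewrite /weight_enum; apply: eq_bigr => c cC.
by have /dvdnP[k ->] := D_wt c cC; rewrite exprMn mulnC exprM zD expr1n mul1r.
Qed.

Definition wt_poly : {poly algC} := \sum_(c : 'rV[F]_N | c \in C) 'X^(wt c).

Lemma horner_wt_poly t : wt_poly.[t] = weight_enum C 1 t.
Proof.
rewrite horner_sum /weight_enum; apply: eq_bigr => c _.
by rewrite hornerXn expr1n mul1r.
Qed.

Lemma coef_wt_poly k : wt_poly`_k = #|[pred c in C | wt c == k]|%:R.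
Proof.
rewrite /wt_poly coef_sum; under eq_bigr do rewrite coefXn.
rewrite -sum1_card natr_sum big_mkcondr /=; apply: eq_bigr => c _.
by rewrite eq_sym; case: (_ == _).
Qed.

Lemma coef_wt_poly_ndvd (D k : nat) :
  (forall c, c \in C -> (D %| wt c)%N) -> ~~ (D %| k)%N -> wt_poly`_k = 0.
Proof.
move=> D_wt D_ndvd_k; rewrite coef_wt_poly; apply/eqP; rewrite pnatr_eq0 -leqn0 leqNgt.
apply/negP => /card_gt0P[c /andP[cC /eqP wt_c]].
by have := D_wt c cC; rewrite wt_c (negPf D_ndvd_k).
Qed.

Lemma wt_poly_at0 : wt_poly.[0] = 1.
Proof.
rewrite horner_coef0 coef_wt_poly -[1]/(1%:R); congr (_ %:R).
rewrite (@eq_card _ _ (pred1 0)) ?card1 // => c /=.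
by rewrite !inE wt_eq0; case: eqP => [->|_]; rewrite ?mem0v ?andbF.
Qed.

Lemma wt_poly_at1 : wt_poly.[1] = (#|F| ^ \dim C)%:R.
Proof.
rewrite -card_vspace horner_sum; under eq_bigr do rewrite hornerXn expr1n.
by rewrite sumr_const.
Qed.

End WeightPolynomial.

Section RotatedMacWilliams.
Variables (F : finFieldType) (N : nat) (C : code F N).
Hypothesis C_fsd : formally_self_dual C.
Variable z : algC.
Hypothesis z_neq0 : z != 0.
Hypothesis C_rot : forall x y, weight_enum C x (z * y) = weight_enum C x y.

Local Notation q := (#|F|%:R : algC).
Local Notation m := ((#|F| - 1)%N%:R : algC).

(* Coefficients of the two eigenforms [x + alpha y], [x + beta y]: the roots of
   [t ^ 2 + (1 + z) t - m z]. *)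
Definition alpha : algC := (- (1 + z) + sqrtC ((1 + z) ^+ 2 + 4 * m * z)) / 2.
Definition beta : algC := (- (1 + z) - sqrtC ((1 + z) ^+ 2 + 4 * m * z)) / 2.

Lemma q_eq : q = m + 1.
Proof. by rewrite natrB ?subrK // (ltnW (finNzRing_gt1 F)). Qed.

Lemma q_neq0 : q != 0.
Proof. by rewrite pnatr_eq0 -lt0n (ltnW (finNzRing_gt1 F)). Qed.

Lemma m_neq0 : m != 0.
Proof. by rewrite pnatr_eq0 subn_eq0 -ltnNge finNzRing_gt1. Qed.

Lemma alpha_add_beta : alpha + beta = - (1 + z).
Proof. by rewrite /alpha /beta; field. Qed.

Lemma alpha_mul_beta : alpha * beta = - (m * z).
Proof.
have sqrt_sq : sqrtC ((1 + z) ^+ 2 + 4 * m * z) ^+ 2 = (1 + z) ^+ 2 + 4 * m * z.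
  exact: sqrtCK.
rewrite /alpha /beta; set s := sqrtC _.
transitivity (((1 + z) ^+ 2 - s ^+ 2) / 4); first by field.
by rewrite sqrt_sq; field.
Qed.

Lemma alpha_mul_beta_neq0 : alpha * beta != 0.
Proof. by rewrite alpha_mul_beta oppr_eq0 mulf_neq0 ?m_neq0. Qed.

Lemma eig_quadratic t : t = alpha \/ t = beta -> m * z = t ^+ 2 + (1 + z) * t.
Proof.
have -> : m * z = - (alpha * beta) by rewrite alpha_mul_beta opprK.
have -> : 1 + z = - (alpha + beta) by rewrite alpha_add_beta opprK.
by case=> ->; ring.
Qed.

Lemma mul_1add_alpha_beta : (1 + alpha) * (1 + beta) = - (q * z).
Proof.
transitivity (1 + (alpha + beta) + alpha * beta); first by ring.
by rewrite alpha_add_beta alpha_mul_beta q_eq; ring.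
Qed.

Lemma add_1add_alpha_beta : (1 + alpha) + (1 + beta) = 1 - z.
Proof.
transitivity (2 + (alpha + beta)); first by ring.
by rewrite alpha_add_beta; ring.
Qed.

Lemma add1_alpha_neq0 : 1 + alpha != 0.
Proof.
apply: contraNneq (mulf_neq0 q_neq0 z_neq0) => alpha_eq.
by rewrite -oppr_eq0 -mul_1add_alpha_beta alpha_eq mul0r.
Qed.

Lemma add1_beta_neq0 : 1 + beta != 0.
Proof.
apply: contraNneq (mulf_neq0 q_neq0 z_neq0) => beta_eq.
by rewrite -oppr_eq0 -mul_1add_alpha_beta beta_eq mulr0.
Qed.

Definition eig_ratio : algC := (1 + alpha) / (1 + beta).

(* [(1 - z)(1 - z^-1) / q = rho + rho^-1 + 2] for [rho := eig_ratio]. *)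
Lemma eig_ratio_unity_Aint k : (0 < k)%N -> eig_ratio ^+ k = 1 ->
  (1 - z) * (1 - z^-1) / q \in Aint.
Proof.
move=> k_gt0 rho_k.
have rho_neq0 : eig_ratio != 0.
  by rewrite mulf_neq0 ?invr_eq0 ?add1_alpha_neq0 ?add1_beta_neq0.
have rho_Aint : eig_ratio \in Aint.
  by apply: (Aint_unity_root k_gt0); rewrite unity_rootE rho_k.
have rhoV : eig_ratio^-1 = eig_ratio ^+ k.-1.
  by apply: (mulfI rho_neq0); rewrite divff // -exprS prednK.
have -> : (1 - z) * (1 - z^-1) / q = eig_ratio + eig_ratio^-1 + 2.
  have -> : eig_ratio + eig_ratio^-1 + 2 =
      ((1 + alpha) + (1 + beta)) ^+ 2 / ((1 + alpha) * (1 + beta)).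
    by rewrite /eig_ratio; field; rewrite add1_alpha_neq0 add1_beta_neq0.
  by rewrite add_1add_alpha_beta mul_1add_alpha_beta; field; rewrite z_neq0 q_neq0.
by rewrite !rpredD ?rhoV ?rpredX // (rpred_nat _ 2).
Qed.

(* The map [(x, y) |-> ((x + m z y) / sqrt q, (x - z y) / sqrt q)] is the MacWilliams
   transform after [y |-> z y]. *)
Lemma twisted_eigenform t : m * z = t ^+ 2 + (1 + z) * t -> forall x y,
  (x + m * (z * y)) / sqrtC q + t * ((x - z * y) / sqrtC q) =
  (1 + t) / sqrtC q * (x + t * y).
Proof.
move=> t_root x y; have sqrt_q_neq0 : sqrtC q != 0 by rewrite sqrtC_eq0 q_neq0.
by rewrite mulrA t_root; field.
Qed.

Lemma wt_poly_factor : (forall k, (0 < k)%N -> eig_ratio ^+ k != 1) ->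
  alpha != beta /\ exists2 a, (a <= N)%N &
    wt_poly C = (1 + alpha *: 'X) ^+ a * (1 + beta *: 'X) ^+ (N - a).
Proof.
move=> rho_nroot.
have sqrt_q_neq0 : sqrtC q != 0 by rewrite sqrtC_eq0 q_neq0.
have l_nroot k : (0 < k)%N ->
    ((1 + alpha) / sqrtC q / ((1 + beta) / sqrtC q)) ^+ k != 1.
  move=> k_gt0; suff -> : (1 + alpha) / sqrtC q / ((1 + beta) / sqrtC q) = eig_ratio.
    exact: rho_nroot.
  by rewrite /eig_ratio; field; rewrite sqrt_q_neq0 add1_beta_neq0.
have alpha_neq_beta : alpha != beta.
  apply: contraNneq (rho_nroot 1%N isT) => alpha_eq.
  by rewrite expr1 /eig_ratio alpha_eq divff ?add1_beta_neq0.
have W_inv x y : weight_enum C ((x + m * (z * y)) / sqrtC q) ((x - z * y) / sqrtC q)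
    = weight_enum C x y.
  by rewrite -C_fsd C_rot.
have [K [a aN W_eq]] := eigenform_factor (@weight_enum_homog _ _ C)
  (@weight_enum_line_poly _ _ C) W_inv alpha_neq_beta
  (mulf_neq0 add1_beta_neq0 (invr_neq0 sqrt_q_neq0))
  (twisted_eigenform (eig_quadratic (or_introl erefl)))
  (twisted_eigenform (eig_quadratic (or_intror erefl))) l_nroot.
have lin_beta_neq0 : (1 + beta *: 'X : {poly algC}) != 0.
  apply/eqP => /(congr1 (fun p : {poly algC} => p`_0)) /eqP.
  by rewrite coefD coef1 coefZ coefX mulr0 addr0 coef0 oner_eq0.
have wt_poly_eq :
    wt_poly C = K *: ((1 + alpha *: 'X) ^+ a * (1 + beta *: 'X) ^+ (N - a)).
  apply/eqP; rewrite -subr_eq0; apply/eqP; apply: (mulIf lin_beta_neq0).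
  rewrite mul0r; apply: poly_eq0_horner => t.
  rewrite !(hornerM, hornerD, hornerN, hornerZ, horner_exp, hornerX, hornerC).
  have [->|lin_t_neq0] := eqVneq (1 + beta * t) 0; first by rewrite mulr0.
  by rewrite horner_wt_poly W_eq // mulrA subrr mul0r.
have K1 : K = 1.
  have := wt_poly_at0 C; rewrite wt_poly_eq.
  by rewrite !(hornerM, hornerD, hornerZ, horner_exp, hornerX, hornerC) !mulr0
    !addr0 !expr1n !mulr1.
by split=> //; exists a; rewrite // wt_poly_eq K1 scale1r.
Qed.

Lemma rotated_fsd_dichotomy :
  (1 - z) * (1 - z^-1) / q \in Aint \/ alpha != beta /\ exists2 a, (a <= N)%N &
    wt_poly C = (1 + alpha *: 'X) ^+ a * (1 + beta *: 'X) ^+ (N - a).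
Proof.
case: (classic (exists2 k, (0 < k)%N & eig_ratio ^+ k = 1)) => [[k k_gt0 rho_k]|].
  by left; exact: eig_ratio_unity_Aint rho_k.
move=> rho_nroot; right; apply: wt_poly_factor => k k_gt0.
by apply/eqP => rho_k; apply: rho_nroot; exists k.
Qed.

End RotatedMacWilliams.

Lemma coef_1addZX_exp (R : comNzRingType) (c : R) a k :
  ((1 + c *: 'X) ^+ a)`_k = 'C(a, k)%:R * c ^+ k.
Proof.
elim: a k => [|a IH] k.
  by rewrite expr0 coef1; case: k => [|k]; rewrite ?bin0 ?mul1r ?mul0r.
rewrite exprSr mulrDr mulr1 coefD -scalerAr coefZ coefMX.
case: k => [|k] /=; first by rewrite IH !bin0 mulr0 addr0.
by rewrite !IH binS natrD exprS mulrDl [c * (_ * _)]mulrCA.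
Qed.

Lemma natr_bin2 (R : numFieldType) a : 'C(a, 2)%:R = a%:R * (a%:R - 1) / 2 :> R.
Proof.
have two_neq0 : 2 != 0 :> R by rewrite pnatr_eq0.
apply: (mulIf two_neq0); rewrite divfK //.
elim: a => [|a IH]; first by rewrite bin0n /= !mul0r.
by rewrite binS bin1 natrD mulrDl IH -addn1 natrD; ring.
Qed.

Lemma coefM1 (R : nzRingType) (p r : {poly R}) :
  (p * r)`_1 = p`_0 * r`_1 + p`_1 * r`_0.
Proof. by rewrite coefM !big_ord_recr big_ord0 /= add0r. Qed.

Lemma coefM2 (R : nzRingType) (p r : {poly R}) :
  (p * r)`_2 = p`_0 * r`_2 + p`_1 * r`_1 + p`_2 * r`_0.
Proof. by rewrite coefM !big_ord_recr big_ord0 /= add0r. Qed.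

Lemma coef1_factor (R : comNzRingType) (x y : R) a b :
  ((1 + x *: 'X) ^+ a * (1 + y *: 'X) ^+ b)`_1 = b%:R * y + a%:R * x.
Proof. by rewrite coefM1 !coef_1addZX_exp !bin0 !bin1 !expr0 !expr1 !mul1r !mulr1. Qed.

Lemma coef2_factor (R : comNzRingType) (x y : R) a b :
  ((1 + x *: 'X) ^+ a * (1 + y *: 'X) ^+ b)`_2 =
  'C(b, 2)%:R * y ^+ 2 + a%:R * x * (b%:R * y) + 'C(a, 2)%:R * x ^+ 2.
Proof. by rewrite coefM2 !coef_1addZX_exp !bin0 !bin1 !expr0 !expr1 !mul1r !mulr1. Qed.

Lemma factor_coef12_eq0 (R : numFieldType) (x y : R) a b :
  x * y != 0 -> x != y ->
  ((1 + x *: 'X) ^+ a * (1 + y *: 'X) ^+ b)`_1 = 0 ->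
  ((1 + x *: 'X) ^+ a * (1 + y *: 'X) ^+ b)`_2 = 0 -> a = 0%N /\ b = 0%N.
Proof.
rewrite coef1_factor coef2_factor => xy_neq0 x_neq_y c1 c2.
have x_neq0 : x != 0 by apply: contraNneq xy_neq0 => ->; rewrite mul0r.
have y_neq0 : y != 0 by apply: contraNneq xy_neq0 => ->; rewrite mulr0.
have : a%:R * x * (x - y) = 0.
  transitivity ((b%:R * y + a%:R * x) * (b%:R * y + a%:R * x - y) - 2 *
    ('C(b, 2)%:R * y ^+ 2 + a%:R * x * (b%:R * y) + 'C(a, 2)%:R * x ^+ 2)).
    by rewrite !natr_bin2; field.
  by rewrite c1 c2 !mul0r mulr0 subr0.
move/eqP; rewrite !mulf_eq0 subr_eq0 (negPf x_neq0) (negPf x_neq_y) !orbF pnatr_eq0 => /eqP a0.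
split=> //; move: c1; rewrite a0 mul0r addr0 => /eqP.
by rewrite mulf_eq0 (negPf y_neq0) orbF pnatr_eq0 => /eqP.
Qed.

Lemma ratio_notAint (a b : nat) :
  (0 < a)%N -> (a < b)%N -> (a%:R / b%:R : algC) \notin Aint.
Proof.
move=> a_gt0 lt_ab; apply/negP => /(Cint_rat_Aint (rpred_div (rpred_nat _ a) (rpred_nat _ b))).
have b_gt0 : (0 < b)%N := ltn_trans a_gt0 lt_ab.
rewrite intrEge0 ?divr_ge0 ?ler0n // => /natrP[k k_eq].
have : 0 < (k%:R : algC) < 1.
  by rewrite -k_eq divr_gt0 ?ltr0n // ltr_pdivrMr ?ltr0n // mul1r ltr_nat.
by rewrite ltr0n ltrn1; case: k {k_eq}.
Qed.

Lemma prod_1subX_prim_root (R : fieldType) D (g : R) : D.-primitive_root g ->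
  \prod_(1 <= j < D) (1 - g ^+ j) = D%:R.
Proof.
move=> prim; have D_gt0 := prim_order_gt0 prim.
have := factor_Xn_sub_1 prim; rewrite big_ltn // expr0 subrX1 => fact.
have prod_eq : \prod_(1 <= i < D) ('X - (g ^+ i)%:P) = \sum_(i < D) 'X^i.
  by apply: (mulfI (negbT (polyXsubC_eq0 (1 : R)))); rewrite fact polyC1.
transitivity (\prod_(1 <= i < D) ('X - (g ^+ i)%:P)).[1].
  by rewrite horner_prod; apply: eq_bigr => i _; rewrite hornerXsubC.
rewrite prod_eq horner_sum; under eq_bigr do rewrite hornerXn expr1n.
by rewrite sumr_const card_ord.
Qed.

Lemma prod_1subVX_prim_root (R : fieldType) D (g : R) : D.-primitive_root g ->
  \prod_(1 <= j < D) (1 - (g ^+ j)^-1) = D%:R.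
Proof.
move=> prim; have g_neq0 : g != 0 by rewrite (prim_root_eq0 prim) -lt0n (prim_order_gt0 prim).
rewrite -(prod_1subX_prim_root prim) big_nat_rev /=.
apply: eq_big_nat => i /andP[_ lt_iD]; congr (1 - _).
rewrite add1n subSS; apply: (mulfI (expf_neq0 (D - i) g_neq0)).
by rewrite divff ?expf_neq0 // -exprD subnK ?(ltnW lt_iD) // prim_expr_order.
Qed.

Lemma sqr_lt_pow (D q : nat) : (3 <= D)%N -> (5 <= q)%N -> (D * D < q ^ D.-1)%N.
Proof.
move=> D_ge3 q_ge5.
have sqr_lt_pow5 k : ((k + 3) * (k + 3) < 5 ^ (k + 2))%N.
  elim: k => [//|k IH].
  have le_sqr : ((k.+1 + 3) * (k.+1 + 3) <= 5 * ((k + 3) * (k + 3)))%N by nia.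
  by apply: (leq_ltn_trans le_sqr); rewrite addSn expnS ltn_pmul2l.
apply: (@leq_trans (5 ^ D.-1)); last first.
  by rewrite leq_exp2r // -subn1 subn_gt0 (leq_trans _ D_ge3).
by rewrite -(subnK D_ge3) [in X in (_ < _ ^ X)%N]addnS /=.
Qed.

Lemma rot_root_Aint (F : finFieldType) (N : nat) (C : code F N) (D : nat) (z : algC) :
  formally_self_dual C -> (3 <= D)%N -> (forall c, c \in C -> (D %| wt c)%N) ->
  N != 0%N -> z != 0 -> z ^+ D = 1 -> (1 - z) * (1 - z^-1) / #|F|%:R \in Aint.
Proof.
move=> C_fsd D_ge3 D_wt N_neq0 z_neq0 zD.
have C_rot x y := weight_enum_rot x y D_wt zD.
case: (rotated_fsd_dichotomy C_fsd z_neq0 C_rot) => [//|[ab_neq [a aN wt_eq]]].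
have no_low_wt k : (0 < k)%N -> (k < 3)%N -> (wt_poly C)`_k = 0.
  move=> k_gt0 lt_k3; apply: (coef_wt_poly_ndvd D_wt).
  by apply: contraTN (leq_trans lt_k3 D_ge3) => /(dvdn_leq k_gt0); rewrite leqNgt.
have [a0 Na0] : a = 0%N /\ (N - a)%N = 0%N.
  apply: factor_coef12_eq0 (alpha_mul_beta_neq0 F z_neq0) ab_neq _ _;
    by rewrite -wt_eq no_low_wt.
by move: N_neq0; rewrite -(subnK aN) Na0 a0.
Qed.

Lemma divisible_ge3_len0 (F : finFieldType) (N : nat) (C : code F N) (D : nat) :
  (4 < #|F|)%N -> formally_self_dual C -> (3 <= D)%N ->
  (forall c, c \in C -> (D %| wt c)%N) -> N = 0%N.
Proof.
move=> q_gt4 C_fsd D_ge3 D_wt; apply/eqP; apply: contraT => N_neq0.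
have D_gt0 : (0 < D)%N by rewrite (leq_trans _ D_ge3).
have [g prim] := C_prim_root_exists D_gt0.
have g_neq0 : g != 0 by rewrite (prim_root_eq0 prim) -lt0n.
have : \prod_(1 <= j < D) ((1 - g ^+ j) * (1 - (g ^+ j)^-1) / #|F|%:R) \in Aint.
  rewrite big_seq_cond; apply: rpred_prod => j /andP[+ _].
  rewrite mem_index_iota => /andP[j_gt0 lt_jD].
  apply: (rot_root_Aint C_fsd D_ge3 D_wt N_neq0 (expf_neq0 j g_neq0)).
  by rewrite exprAC (prim_expr_order prim) expr1n.
rewrite !big_split /= prod_1subX_prim_root // prod_1subVX_prim_root //.
rewrite prodr_const_nat exprVn -natrM -natrX subn1.
by rewrite (negPf (ratio_notAint _ _)) ?muln_gt0 ?D_gt0 ?sqr_lt_pow.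
Qed.

Lemma even_fsd_wt_poly (F : finFieldType) (n : nat) (C : code F (2 * n)) :
  (4 < #|F|)%N -> formally_self_dual C -> (forall c, c \in C -> (2 %| wt c)%N) ->
  exists2 x : algC, x ^+ 2 = 1 - #|F|%:R &
    wt_poly C = (1 + x *: 'X) ^+ n * (1 + (- x) *: 'X) ^+ n.
Proof.
move=> q_gt4 C_fsd even_wt.
have m1_neq0 : (-1 : algC) != 0 by rewrite oppr_eq0 oner_eq0.
have m1_sqr : (-1 : algC) ^+ 2 = 1 by rewrite sqrrN expr1n.
have C_rot x y := weight_enum_rot x y even_wt m1_sqr.
case: (rotated_fsd_dichotomy C_fsd m1_neq0 C_rot) => [|[_ [a aN wt_eq]]].
  suff -> : (1 - -1) * (1 - (-1)^-1) / #|F|%:R = 4%:R / #|F|%:R :> algC.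
    by rewrite (negPf (ratio_notAint _ _)).
  by rewrite invrN invr1; congr (_ / _); ring.
set x := alpha F (-1) in wt_eq.
have beta_eq : beta F (-1) = - x.
  by apply/eqP; rewrite -addr_eq0 addrC alpha_add_beta addrN oppr0.
rewrite beta_eq in wt_eq.
have x_sqr : x ^+ 2 = 1 - #|F|%:R.
  have := alpha_mul_beta F (-1); rewrite -/x beta_eq mulrN1 opprK.
  rewrite natrB ?(ltnW (finNzRing_gt1 F)) // => x_mulN.
  by rewrite expr2 -[x * x]opprK -mulrN x_mulN opprB.
have x_neq0 : x != 0.
  have : x ^+ 2 != 0 by rewrite x_sqr subr_eq0 eq_sym pnatr_eq1 gtn_eqF ?finNzRing_gt1.
  by apply: contraNneq => ->; rewrite expr2 mul0r.
have a_eq : a = n.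
  have := coef_wt_poly_ndvd even_wt (isT : ~~ (2 %| 1)%N).
  rewrite wt_eq coef1_factor mulrN -mulNr -mulrDl => /eqP.
  rewrite mulf_eq0 (negPf x_neq0) orbF addrC subr_eq0 eqr_nat => /eqP; lia.
have n_eq : (2 * n - a = n)%N by lia.
by exists x; rewrite // wt_eq n_eq a_eq.
Qed.

Lemma even_fsd_dim_card (F : finFieldType) (n : nat) (C : code F (2 * n)) :
  (4 < #|F|)%N -> formally_self_dual C -> (forall c, c \in C -> (2 %| wt c)%N) ->
  \dim C = n /\ #|[pred c in C | wt c == 2%N]| = (n * (#|F| - 1))%N.
Proof.
move=> q_gt4 C_fsd even_wt.
have [x x_sqr wt_eq] := even_fsd_wt_poly q_gt4 C_fsd even_wt.
split.
  have := wt_poly_at1 C; rewrite wt_eq.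
  rewrite !(hornerM, horner_exp, hornerD, hornerZ, hornerX, hornerC) !mulr1 -exprMn.
  have -> : (1 + x) * (1 + - x) = #|F|%:R.
    by transitivity (1 - x ^+ 2); [ring | rewrite x_sqr; ring].
  by rewrite -natrX => /eqP; rewrite eqr_nat => /eqP /(expnI (finNzRing_gt1 F)).
apply/eqP; rewrite -(eqr_nat algC) -coef_wt_poly wt_eq coef2_factor.
rewrite natrM natrB ?(ltnW (finNzRing_gt1 F)) //; apply/eqP.
transitivity (- n%:R * x ^+ 2); first by rewrite !natr_bin2; field.
by rewrite x_sqr; ring.
Qed.

Definition supp (F : finFieldType) (N : nat) (c : 'rV[F]_N) : {set 'I_N} :=
  [set i | c 0 i != 0].

Lemma in_supp (F : finFieldType) (N : nat) (c : 'rV[F]_N) i :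
  (i \in supp c) = (c 0 i != 0).
Proof. by rewrite inE. Qed.

Lemma wt_supp (F : finFieldType) (N : nat) (c : 'rV[F]_N) : wt c = #|supp c|.
Proof. by []. Qed.

Lemma suppZ (F : finFieldType) (N : nat) (k : F) (c : 'rV[F]_N) :
  k != 0 -> supp (k *: c) = supp c.
Proof. by move=> k_neq0; apply/setP => l; rewrite !in_supp mxE mulf_eq0 (negPf k_neq0). Qed.

Lemma card2_set2 (T : finType) (P : {set T}) i : #|P| = 2%N -> i \in P ->
  exists2 j, j != i & P = [set i; j].
Proof.
move=> P2 iP; have /eqP := cardsD1 i P; rewrite P2 iP eqSS => /eqP P1.
have /cards1P[j Pi_eq] : #|P :\ i| == 1%N by rewrite -P1.
exists j; last by rewrite -[LHS](setD1K iP) Pi_eq.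
by have := set11 j; rewrite -Pi_eq => /setD1P[].
Qed.

Lemma exists_neq0_neq (F : finFieldType) (b : F) : (2 < #|F|)%N ->
  exists2 t : F, t != 0 & t != b.
Proof.
move=> q_gt2; have : ~~ ([set: F] \subset [set 0; b]).
  apply: contraL q_gt2 => /subset_leq_card; rewrite cardsT cards2 -leqNgt => le_q.
  by apply: leq_trans le_q _; case: (_ != _).
by case/subsetPn => t _; rewrite !inE negb_or => /andP[]; exists t.
Qed.

Section WeightTwoWords.
Variables (F : finFieldType) (n : nat) (C : code F (2 * n)).
Hypothesis q_gt2 : (2 < #|F|)%N.
Hypothesis even_wt : forall c, c \in C -> (2 %| wt c)%N.
Hypothesis dimC : \dim C = n.
Hypothesis card_wt2 : #|[pred c in C | wt c == 2%N]| = (n * (#|F| - 1))%N.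

Definition wt2_words := [set c : 'rV[F]_(2 * n) | (c \in C) && (wt c == 2%N)].
Definition wt2_supps := [set supp c | c in wt2_words].

Lemma supp_subset_wt2 c c' : c \in C -> wt c = 2%N -> c' \in C ->
  supp c' \subset supp c -> exists k, c' = k *: c.
Proof.
move=> cC wt_c c'C sub_cc'.
have /card_gt0P[i ci] : (0 < #|supp c|)%N by rewrite -wt_supp wt_c.
have ci_neq0 : c 0 i != 0 by rewrite -in_supp.
pose d := c' - (c' 0 i / c 0 i) *: c.
have sub_d : supp d \subset supp c :\ i.
  apply/subsetP => l; rewrite in_supp !inE /d !mxE => dl_neq0; apply/andP; split.
    by apply: contraNneq dl_neq0 => ->; rewrite divfK // subrr.
  apply: contraNT dl_neq0; rewrite -in_supp => cl0.
  have c'l0 : l \notin supp c' by apply: contra cl0; apply: (subsetP sub_cc').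
  by move: cl0 c'l0; rewrite !in_supp !negbK => /eqP-> /eqP->; rewrite mulr0 subrr.
have le_wt_d : (wt d <= 1)%N.
  rewrite (leq_trans (subset_leq_card sub_d)) //.
  by have /eqP := cardsD1 i (supp c); rewrite -wt_supp wt_c ci eqSS => /eqP <-.
have dC : d \in C by rewrite rpredB ?rpredZ.
have wt_d0 : wt d = 0%N by move: (even_wt dC) le_wt_d; case: (wt d) => [|[|]].
by exists (c' 0 i / c 0 i); apply/eqP; rewrite -subr_eq0 -wt_eq0 -/d wt_d0.
Qed.

Lemma card_wt2_fiber P : P \in wt2_supps ->
  #|[set c in wt2_words | supp c == P]| = (#|F| - 1)%N.
Proof.
case/imsetP => c0; rewrite inE => /andP[c0C /eqP wt_c0] ->.
have /card_gt0P[i c0i] : (0 < #|supp c0|)%N by rewrite -wt_supp wt_c0.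
have c0i_neq0 : c0 0 i != 0 by rewrite -in_supp.
have -> : [set c in wt2_words | supp c == supp c0] = [set k *: c0 | k in [set~ 0]].
  apply/setP => c; rewrite !inE; apply/idP/imsetP => [|[k]]; last first.
    rewrite !inE => k_neq0 ->.
    by rewrite rpredZ //= wt_supp suppZ // -wt_supp wt_c0 !eqxx.
  case/andP => /andP[cC /eqP wt_c] /eqP supp_c.
  have [k c_eq] : exists k, c = k *: c0.
    by apply: supp_subset_wt2 c0C wt_c0 cC _; rewrite supp_c.
  have : k *: c0 != 0 by rewrite -c_eq -wt_eq0 wt_c.
  by rewrite scaler_eq0 negb_or => /andP[k_neq0 _]; exists k; rewrite ?inE.
rewrite card_in_imset ?cardsC1 ?subn1 // => k k' _ _ /rowP /(_ i).
by rewrite !mxE; apply: mulIf.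
Qed.

Lemma card_wt2_supps : #|wt2_supps| = n.
Proof.
have q1_gt0 : (0 < #|F| - 1)%N by rewrite subn_gt0 (ltnW q_gt2).
apply/eqP; rewrite -(eqn_pmul2r q1_gt0) -card_wt2; apply/eqP.
have -> : #|[pred c in C | wt c == 2%N]| = #|wt2_words|.
  by apply: eq_card => c; rewrite !inE.
rewrite -[#|wt2_words|]sum1_card (partition_big (@supp F _) (mem wt2_supps)) /=; last first.
  by move=> c c_wt2; apply/imsetP; exists c.
rewrite -sum_nat_const; apply: eq_bigr => P P_wt2.
by rewrite -(card_wt2_fiber P_wt2) -sum1_card; apply: eq_bigl => c; rewrite inE.
Qed.

Lemma card_wt2_supp P : P \in wt2_supps -> #|P| = 2%N.
Proof. by case/imsetP => c; rewrite inE => /andP[_ /eqP wt_c] ->. Qed.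

Lemma wt2_overlap_wt3 c c' i j k : c \in C -> c' \in C ->
  supp c = [set i; j] -> supp c' = [set i; k] -> j != i -> k != i -> j != k ->
  exists2 d, d \in C & wt d = 3%N.
Proof.
move=> cC c'C supp_c supp_c' ji ki jk.
have c_nz l : (c 0 l != 0) = (l \in [set i; j]) by rewrite -in_supp supp_c.
have c'_nz l : (c' 0 l != 0) = (l \in [set i; k]) by rewrite -in_supp supp_c'.
have c_0 l : l \notin [set i; j] -> c 0 l = 0 by rewrite -c_nz negbK => /eqP.
have c'_0 l : l \notin [set i; k] -> c' 0 l = 0 by rewrite -c'_nz negbK => /eqP.
have c'i_neq0 : c' 0 i != 0 by rewrite c'_nz set21.
have [t t_neq0 t_ncancel] := exists_neq0_neq (- c 0 i / c' 0 i) q_gt2.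
exists (c + t *: c'); first by rewrite rpredD ?rpredZ.
have supp_d : supp (c + t *: c') = [set i; j; k].
  apply/setP => l; rewrite in_supp !mxE !inE.
  have [->|li] := eqVneq l i.
    apply: contra t_ncancel => /eqP cancel_i; apply/eqP.
    have t_eq : t * c' 0 i = - c 0 i.
      by apply/eqP; rewrite -addr_eq0 addrC cancel_i.
    by rewrite -t_eq mulfK.
  have [->|lj] := eqVneq l j.
    by rewrite c'_0 ?mulr0 ?addr0 ?c_nz ?set22 // !inE negb_or ji jk.
  have [->|lk] := eqVneq l k.
    by rewrite c_0 ?add0r ?mulf_eq0 ?(negPf t_neq0) ?c'_nz ?set22 // !inE negb_or ki eq_sym jk.
  by rewrite c_0 ?c'_0 ?mulr0 ?addr0 ?eqxx // !inE negb_or ?li ?lj ?lk.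
by rewrite wt_supp supp_d -setUA cardsU1 cards2 jk !inE negb_or eq_sym ji eq_sym ki.
Qed.

Lemma wt2_supps_disjoint P P' : P \in wt2_supps -> P' \in wt2_supps -> P != P' ->
  [disjoint P & P'].
Proof.
case/imsetP => c; rewrite inE => /andP[cC /eqP wt_c] ->.
case/imsetP => c'; rewrite inE => /andP[c'C /eqP wt_c'] -> neq_supp.
rewrite wt_supp in wt_c; rewrite wt_supp in wt_c'.
apply/pred0P => i /=; apply/negP => /andP[ci c'i].
have [j ji supp_c] := card2_set2 wt_c ci.
have [k ki supp_c'] := card2_set2 wt_c' c'i.
have jk : j != k by apply: contraNneq neq_supp => jk; rewrite supp_c supp_c' jk.
have [d dC wt_d] := wt2_overlap_wt3 cC c'C supp_c supp_c' ji ki jk.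
by have := even_wt dC; rewrite wt_d.
Qed.

Lemma cover_wt2_supps : cover wt2_supps = [set: 'I_(2 * n)].
Proof.
have cover_card : #|cover wt2_supps| = (2 * n)%N.
  have : trivIset wt2_supps by apply/trivIsetP; exact: wt2_supps_disjoint.
  move/eqP <-.
  rewrite (eq_bigr (fun _ => 2%N)); last by move=> P; move/card_wt2_supp.
  by rewrite sum_nat_const card_wt2_supps mulnC.
by apply/eqP; rewrite eqEcard subsetT cardsT card_ord cover_card leqnn.
Qed.

Definition supp_pair (k : nat) : {set 'I_(2 * n)} := nth set0 (enum wt2_supps) k.

Lemma supp_pair_wt2 k : (k < n)%N -> supp_pair k \in wt2_supps.
Proof. by move=> lt_kn; rewrite -mem_enum mem_nth // -cardE card_wt2_supps. Qed.

Lemma card_supp_pair k : (k < n)%N -> size (enum (supp_pair k)) = 2%N.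
Proof. by move=> lt_kn; rewrite -cardE card_wt2_supp ?supp_pair_wt2. Qed.

Lemma mem_supp_pair_eq k k' l : (k < n)%N -> (k' < n)%N ->
  l \in supp_pair k -> l \in supp_pair k' -> k = k'.
Proof.
move=> lt_kn lt_k'n lk lk'; apply/eqP; apply: contraT => neq_kk'.
have : supp_pair k != supp_pair k'.
  by rewrite nth_uniq ?enum_uniq // -cardE card_wt2_supps.
move/(wt2_supps_disjoint (supp_pair_wt2 lt_kn) (supp_pair_wt2 lt_k'n)).
by move/pred0P/(_ l); rewrite /= lk lk'.
Qed.

Definition pair_word (k : nat) : 'rV[F]_(2 * n) :=
  odflt 0 [pick c in wt2_words | supp c == supp_pair k].

Lemma pair_word_spec k : (k < n)%N ->
  pair_word k \in C /\ supp (pair_word k) = supp_pair k.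
Proof.
move=> lt_kn; rewrite /pair_word; case: pickP => [c /andP[] | no_c].
  by rewrite inE => /andP[cC _] /eqP.
have /imsetP[c c_wt2 supp_c] := supp_pair_wt2 lt_kn.
by have := no_c c; rewrite c_wt2 supp_c eqxx.
Qed.

Lemma pair_word_nz k l : (k < n)%N -> (pair_word k 0 l != 0) = (l \in supp_pair k).
Proof. by move/pair_word_spec => [_ <-]; rewrite in_supp. Qed.

Lemma pair_word_eq0 k l : (k < n)%N -> (pair_word k 0 l == 0) = (l \notin supp_pair k).
Proof. by move=> lt_kn; rewrite -pair_word_nz ?negbK. Qed.

Lemma half_lt (l : 'I_(2 * n)) : (l %/ 2 < n)%N.
Proof. by rewrite ltn_divLR // [(n * 2)%N]mulnC. Qed.

Definition relabel (l : 'I_(2 * n)) : 'I_(2 * n) :=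
  nth l (enum (supp_pair (l %/ 2))) (l %% 2).

Lemma relabel_in l : relabel l \in supp_pair (l %/ 2).
Proof. by rewrite -mem_enum mem_nth // card_supp_pair ?half_lt // ltn_pmod. Qed.

Lemma relabel_inj : injective relabel.
Proof.
move=> l l' eq_ll'.
have eq_div : (l %/ 2 = l' %/ 2)%N.
  by apply: (mem_supp_pair_eq (half_lt l) (half_lt l') (relabel_in l)); rewrite eq_ll' relabel_in.
have eq_mod : (l %% 2 = l' %% 2)%N.
  move: eq_ll'; rewrite /relabel eq_div (set_nth_default l') ?card_supp_pair ?half_lt ?ltn_pmod //.
  move/eqP; rewrite nth_uniq ?enum_uniq ?card_supp_pair ?half_lt ?ltn_pmod //.
  by move/eqP.
by apply: val_inj; rewrite /= (divn_eq l 2) (divn_eq l' 2) eq_div eq_mod.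
Qed.

Definition relabel_perm : 'S_(2 * n) := perm relabel_inj.

Definition rescale : 'rV[F]_(2 * n) := \row_l (pair_word (l %/ 2) 0 (relabel l))^-1.

Local Notation monomial := (diag_mx rescale *m perm_mx relabel_perm).

Lemma monomial_entry (v : 'rV[F]_(2 * n)) l :
  ((monomial *m v^T)^T) 0 l = rescale 0 l * v 0 (relabel l).
Proof. by rewrite mxE -mulmxA -row_permE mul_diag_mx !mxE permE. Qed.

Lemma monomial_pair_word (k : 'I_n) :
  (monomial *m (pair_word k)^T)^T = row k (rep_gen F n).
Proof.
apply/rowP => l; rewrite monomial_entry !mxE.
have [eq_lk|neq_lk] := eqVneq (l %/ 2)%N (k : nat).
  by rewrite eq_lk mulVf //= pair_word_nz // -eq_lk relabel_in.
rewrite (_ : pair_word k 0 (relabel l) = 0) ?mulr0 //; apply/eqP.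
rewrite pair_word_eq0 //; apply: contra neq_lk => lk.
by apply/eqP; apply: mem_supp_pair_eq (half_lt l) _ (relabel_in l) lk.
Qed.

Lemma free_pair_words : free [tuple pair_word k | k < n].
Proof.
apply/freeP => a comb0 i.
have /card_gt0P[l li] : (0 < #|supp_pair i|)%N by rewrite card_wt2_supp ?supp_pair_wt2.
have := congr1 (fun v : 'rV[F]_(2 * n) => v 0 l) comb0.
rewrite /= summxE (bigD1 i) //= big1 ?addr0 => [|j ji].
  rewrite !mxE nth_mktuple => /eqP; rewrite mulf_eq0 pair_word_eq0 // li orbF.
  by move/eqP.
rewrite !mxE nth_mktuple (_ : pair_word j 0 l = 0) ?mulr0 //; apply/eqP.
rewrite pair_word_eq0 //; apply: contra ji => lj; apply/eqP/val_inj.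
exact: mem_supp_pair_eq (ltn_ord j) (ltn_ord i) lj li.
Qed.

Lemma span_pair_words : <<[tuple pair_word k | k < n]>>%VS = C.
Proof.
apply/eqP; rewrite eqEdim; apply/andP; split.
  by apply/span_subvP => v /mapP [k _ ->]; case: (pair_word_spec (ltn_ord k)).
by rewrite dimC (eqP free_pair_words) size_tuple.
Qed.

Lemma wt2_monomially_equivalent : monomially_equivalent C (rep_sum F n).
Proof.
exists (diag_mx rescale), relabel_perm; split; first exact: diag_mx_is_diag.
split.
  rewrite unitmxE det_diag unitfE; apply/prodf_neq0 => l _.
  by rewrite mxE invr_eq0 pair_word_nz ?half_lt // relabel_in.
pose f := linfun (@mulmxr F 1 _ _ monomial^T).
have fE v : f v = (monomial *m v^T)^T by rewrite lfunE /= [RHS]trmx_mul trmxK.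
have img_C : rep_sum F n = (f @: C)%VS.
  rewrite -span_pair_words limg_span /rep_sum; congr (span _).
  rewrite /mktuple /= -map_comp; apply: eq_map => k /=.
  by rewrite fE monomial_pair_word.
move=> v; rewrite img_C; split.
  by case/memv_imgP => c cC ->; exists c; rewrite ?fE.
by case=> c cC ->; apply/memv_imgP; exists c; rewrite ?fE.
Qed.

End WeightTwoWords.

Lemma monomially_equivalent_len0 (F : finFieldType) (C C' : code F 0) :
  monomially_equivalent C C'.
Proof.
have rV0_eq (u v : 'rV[F]_0) : u = v by apply/rowP => -[].
exists 1%:M, 1%g; split; first exact: scalar_mx_is_diag.
split=> [|v]; first by rewrite unitmx1.
by split=> _; [exists 0; rewrite ?mem0v | rewrite (rV0_eq v 0) mem0v].
Qed.

Unset Implicit Arguments.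
Theorem corollary3p7 (F : finFieldType) (n : nat) (C : code F (2 * n)) :
  (4 < #|F|)%N ->
  formally_self_dual C ->
  divisible C ->
  monomially_equivalent C (rep_sum F n).
Proof.
move=> q_gt4 C_fsd [D [D_gt1 D_wt]].
have [D2|D_neq2] := eqVneq D 2%N.
  rewrite D2 in D_wt; have [dimC card_wt2] := even_fsd_dim_card q_gt4 C_fsd D_wt.
  exact: wt2_monomially_equivalent (ltnW (ltnW q_gt4)) D_wt dimC card_wt2.
have D_ge3 : (3 <= D)%N by rewrite ltn_neqAle eq_sym D_neq2 D_gt1.
have /eqP := divisible_ge3_len0 q_gt4 C_fsd D_ge3 D_wt.
rewrite muln_eq0 /= => /eqP n0; subst n.
exact: monomially_equivalent_len0.
Qed.
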